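(* Let $m = m_0 + x m_1 \in R_r$ satisfy $m \equiv x \pmod t$ and $\deg m_1 - \deg m_0 < -1$, and let $N \ge 1$. The map $\Phi_m : R_r/(t^N) \to \{0,1,x,1+x\}^N$ sending the class of $f$ to the first $N$ terms of its parity sequence is well defined and is a bijection. Moreover, for each $(p_0,\dots,p_{N-1}) \in \{0,1,x,1+x\}^N$, with $s(N) = \#\{0 \le k < N : p_k = 1+x\}$, there exist $g_{N-1}, h_{N-1} \in R_r$ with $\deg g_{N-1} < N$ and $\deg h_{N-1} < s(N)\deg m$ such that the elements of $R_r$ whose parity sequence begins with $(p_0,\dots,p_{N-1})$ are exactly those of the form $f = g_{N-1} + t^N q$ with $q \in R_r$, and for each such $f$ one has $T^N(f) = h_{N-1} + m^{s(N)} q$. In particular, the first $N$ parity terms of a uniformly random element of $R_r$ of degree $< N$ are uniformly distributed on $\{0,1,x,1+x\}^N$.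
   Context: Let $r(t) = t^2 + t + 1$ and $R_r = \mathbb{F}_2[x,t]/(x^2 + tx + r(t))$. Every $f \in R_r$ is uniquely $f = f_0(t) + x f_1(t)$ with $f_0, f_1 \in \mathbb{F}_2[t]$, and $\deg f = \max\{\deg f_0, \deg f_1\}$ (degrees in $t$, $\deg 0 = -\infty$). Modulo $t$ every element is congruent to exactly one of $0, 1, x, 1+x$. For $m \in R_r$ with $m \equiv x \pmod t$, the $mx+1$ map $T: R_r \to R_r$ is $T(f) = (mf + 1 + x)/t$ if $f \equiv 1+x$, $T(f) = (f+x)/t$ if $f \equiv x$, $T(f) = (f+1)/t$ if $f \equiv 1$, and $T(f) = f/t$ if $f \equiv 0 \pmod t$. The parity sequence of $f$ is $(p_0,p_1,\dots)$ where $p_k \in \{0,1,x,1+x\}$ is the residue of $T^k(f)$ modulo $t$. *)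

From HB Require Import structures.
From mathcomp Require Import all_boot all_order all_algebra.
Set Implicit Arguments. Unset Strict Implicit. Unset Printing Implicit Defensive.
Import GRing.Theory.
Local Open Scope ring_scope.

(* Base polynomial ring F_2[t]; t is represented by 'X. *)
Notation P := {poly 'F_2}.

(* R_r = F_2[x,t]/(x^2 + t x + r(t)), r(t) = t^2 + t + 1.
   An element f = f0(t) + x f1(t) is represented by the pair (f0, f1). *)
Definition Rr := (P * P)%type.

Definition rpoly : P := 'X^2 + 'X + 1.

Definition radd (f g : Rr) : Rr := (f.1 + g.1, f.2 + g.2).

(* (a + x b)(c + x d) = ac + x(ad+bc) + x^2 bd,  x^2 = t x + r(t) (char 2) *)
Definition rmul (f g : Rr) : Rr :=
  (f.1 * g.1 + rpoly * (f.2 * g.2),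
   f.1 * g.2 + f.2 * g.1 + 'X * (f.2 * g.2)).

Definition rzero : Rr := (0, 0).
Definition rone  : Rr := (1, 0).
Definition rx    : Rr := (0, 1).
Definition r1x   : Rr := (1, 1).

Definition tpow (N : nat) : Rr := ('X^N, 0).

Definition rpow (m : Rr) (k : nat) : Rr := iter k (rmul m) rone.

(* size of f = 1 + deg f (0 for f = 0), deg f = max(deg f0, deg f1).
   Hence  deg f < k  <->  rsize f <= k  for k : nat. *)
Definition rsize (f : Rr) : nat := maxn (size f.1) (size f.2).

(* residue of f modulo t, as one of the representatives 0, 1, x, 1+x *)
Definition par (f : Rr) : Rr := ((f.1.[0])%:P, (f.2.[0])%:P).

(* division by t (exact when applied to multiples of t) *)
Definition divt (f : Rr) : Rr := (f.1 %/ 'X, f.2 %/ 'X).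

Definition Tmap (m : Rr) (f : Rr) : Rr :=
  if par f == r1x then divt (radd (rmul m f) r1x)
  else if par f == rx then divt (radd f rx)
  else if par f == rone then divt (radd f rone)
  else divt f.

Definition parseq (m : Rr) (N : nat) (f : Rr) : seq Rr :=
  [seq par (iter k (Tmap m) f) | k <- iota 0 N].

Definition residues : seq Rr := [:: rzero; rone; rx; r1x].

Definition s_count (p : seq Rr) : nat := count (pred1 r1x) p.

From HB Require Import structures.
From mathcomp Require Import all_boot all_order all_algebra.
From mathcomp Require Import ring zify.
Import GRing.Theory.
Local Open Scope ring_scope.

(* Write f = g + t u.  As t kills constant terms, T(g + t u) = T(g) + c u with
   c = m if g = 1 + x mod t and c = 1 otherwise; iterating,
   T^k(g + t^(k+n) u) = T^k(g) + t^n m^s u, where s counts the 1 + x among the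
   first k parities of g.  So the first N parities only depend on f mod t^N and
   T^N is affine of slope m^s on each cylinder.  Conversely m = x is a unit
   mod t (multiplying by x swaps the two constant coefficients, as x^2 = r(0) = 1
   mod t), so equal parity prefixes force congruence mod t^N, and any prefix is
   reached by fixing the coefficients of t^0, t^1, ... in turn.  The degree
   bound rests on deg(m f) <= deg m + deg f, where deg m_1 + 2 <= deg m_0 absorbs
   the term r(t) m_1 f_1. *)

Lemma addrr_polyF2 (p : P) : p + p = 0.
Proof. by apply: addrr_pchar2; rewrite pchar_poly; exact: pchar_Fp. Qed.

Definition rscale (c : P) (u : Rr) : Rr := (c * u.1, c * u.2).
Definition rswap (u : Rr) : Rr := (u.2, u.1).

Lemma raddC f g : radd f g = radd g f.
Proof. by rewrite /radd; congr (_, _); ring. Qed.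

Lemma raddr0 f : radd f rzero = f.
Proof. by case: f => f1 f2; rewrite /radd /= !addr0. Qed.

Lemma raddrr f : radd f f = rzero.
Proof. by rewrite /radd !addrr_polyF2. Qed.

Lemma raddKr f g : radd f (radd f g) = g.
Proof. by case: g => g1 g2; rewrite /radd /= !addrA !addrr_polyF2 !add0r. Qed.

Lemma radd_inj f : injective (radd f).
Proof. by move=> g h /(congr1 (radd f)); rewrite !raddKr. Qed.

Lemma rmul1r u : rmul rone u = u.
Proof. by case: u => u1 u2; rewrite /rmul /=; congr (_, _); ring. Qed.

Lemma rmulr1 u : rmul u rone = u.
Proof. by case: u => u1 u2; rewrite /rmul /=; congr (_, _); ring. Qed.

Lemma rmulC a b : rmul a b = rmul b a.
Proof. by rewrite /rmul; congr (_, _); ring. Qed.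

Lemma rmulA a b u : rmul a (rmul b u) = rmul (rmul a b) u.
Proof. by rewrite /rmul /=; congr (_, _); ring. Qed.

Lemma rmul_tpow N u : rmul (tpow N) u = rscale 'X^N u.
Proof. by rewrite /rmul /rscale /=; congr (_, _); ring. Qed.

Lemma rmul_rscale a c u : rmul a (rscale c u) = rscale c (rmul a u).
Proof. by rewrite /rmul /rscale /=; congr (_, _); ring. Qed.

Lemma rscale1 u : rscale 1 u = u.
Proof. by case: u => u1 u2; rewrite /rscale /= !mul1r. Qed.

Lemma rscale0 c : rscale c rzero = rzero.
Proof. by rewrite /rscale /= mulr0. Qed.

Lemma rscaleXnS n u : rscale 'X^(n.+1) u = rscale 'X (rscale 'X^n u).
Proof. by rewrite /rscale /= !exprS !mulrA. Qed.

Lemma rscaleX_inj : injective (rscale 'X).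
Proof.
move=> [u1 u2] [v1 v2] [/mulfI e1 /mulfI e2].
by rewrite e1 ?e2 ?polyX_eq0.
Qed.

Lemma rswapK : involutive rswap.
Proof. by case. Qed.

Lemma iter_rswapK s : involutive (iter s rswap).
Proof. by elim: s => // s IH u; rewrite iterSr iterS rswapK IH. Qed.

Lemma rpowS m s : rpow m s.+1 = rmul m (rpow m s).
Proof. by []. Qed.

Lemma par_radd f g : par (radd f g) = radd (par f) (par g).
Proof. by rewrite /par /radd /= !hornerD !polyCD. Qed.

Lemma par_rscaleX u : par (rscale 'X u) = rzero.
Proof. by rewrite /par /= !hornerM hornerX !mul0r. Qed.

Lemma par_add_rscaleX f u : par (radd f (rscale 'X u)) = par f.
Proof. by rewrite par_radd par_rscaleX raddr0. Qed.

Lemma par_id f : par (par f) = par f.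
Proof. by rewrite /par /= !hornerC. Qed.

Lemma par_iter_rswap s u : par (iter s rswap u) = iter s rswap (par u).
Proof. by elim: s => //= s IH; rewrite -IH; case: (iter s rswap u). Qed.

Lemma par_residue a : a \in residues -> par a = a.
Proof. by rewrite !inE => /or4P [] /eqP ->; rewrite /par /= !hornerE ?polyC0. Qed.

Lemma divtK u : par u = rzero -> rscale 'X (divt u) = u.
Proof.
have divXK (p : P) : p.[0] = 0 -> 'X * (p %/ 'X) = p.
  move=> p0; rewrite mulrC divpK // -[X in X %| _]subr0 -polyC0.
  by rewrite dvdp_XsubCl; apply/eqP.
case: u => u1 u2 [/eqP]; rewrite polyC_eq0 => /eqP u10 /eqP.
by rewrite polyC_eq0 => /eqP u20; rewrite /rscale /divt /= !divXK.
Qed.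

Lemma divt_add_rscaleX f u : divt (radd f (rscale 'X u)) = radd (divt f) u.
Proof. by rewrite /divt /radd /rscale /= !divpD !mulKp ?polyX_eq0. Qed.

Definition Tfactor (m f : Rr) : Rr := if par f == r1x then m else rone.

Lemma Tmap_add_rscaleX m f u :
  Tmap m (radd f (rscale 'X u)) = radd (Tmap m f) (rmul (Tfactor m f) u).
Proof.
rewrite /Tmap /Tfactor par_add_rscaleX.
case: ifP => _; last rewrite rmul1r; repeat case: ifP => _;
  rewrite -divt_add_rscaleX //; congr divt;
  by rewrite /radd /rmul /rscale /=; congr (_, _); ring.
Qed.

Lemma parseqS m k f : parseq m k.+1 f = par f :: parseq m k (Tmap m f).
Proof.
rewrite /parseq -add1n iotaD add0n (iotaDl 1 0) /= -map_comp.
by congr cons; apply: eq_map => i /=; rewrite -iterSr.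
Qed.

Lemma parseq_rcons m k f :
  parseq m k.+1 f = rcons (parseq m k f) (par (iter k (Tmap m) f)).
Proof. by rewrite /parseq -addn1 iotaD map_cat cats1. Qed.

Lemma rpow_s_countS m k f :
  rpow m (s_count (parseq m k.+1 f))
  = rmul (rpow m (s_count (parseq m k (Tmap m f)))) (Tfactor m f).
Proof.
rewrite parseqS /s_count /Tfactor /=.
by case: ifP => _; rewrite ?rmulr1 // add1n rpowS rmulC.
Qed.

Lemma iter_Tmap_add_rscale m k n f u :
  iter k (Tmap m) (radd f (rscale 'X^(k + n) u))
  = radd (iter k (Tmap m) f) (rscale 'X^n (rmul (rpow m (s_count (parseq m k f))) u)).
Proof.
elim: k f u => [|k IH] f u; first by rewrite rmul1r.
by rewrite !iterSr addSn rscaleXnS Tmap_add_rscaleX rmul_rscale IH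
  rpow_s_countS rmulA.
Qed.

Lemma parseq_add_rscale m k n f u :
  parseq m k (radd f (rscale 'X^(k + n) u)) = parseq m k f.
Proof.
elim: k f u => [|k IH] f u //.
by rewrite !parseqS addSn rscaleXnS Tmap_add_rscaleX rmul_rscale IH
  par_add_rscaleX.
Qed.

Lemma rsize_radd f g : (rsize (radd f g) <= maxn (rsize f) (rsize g))%N.
Proof.
rewrite /rsize geq_max; apply/andP; split; apply: leq_trans (size_polyD _ _) _;
  by rewrite !geq_max !leq_max !leqnn ?orbT.
Qed.

Lemma rsize_par f : (rsize (par f) <= 1)%N.
Proof. by rewrite /rsize geq_max !size_polyC_leq1. Qed.

Lemma rsize_rscaleXn k u : (rsize (rscale 'X^k u) <= k + rsize u)%N.
Proof.
rewrite /rsize geq_max; apply/andP; split;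
  apply: leq_trans (size_polyMleq _ _) _; rewrite size_polyXn addSn /=;
  by rewrite leq_add2l leq_max leqnn ?orbT.
Qed.

Lemma rscaleXn_small_eq0 k u : (rsize (rscale 'X^k u) <= k)%N -> u = rzero.
Proof.
have small (p : P) : (size ('X^k * p)%R <= k)%N -> p = 0.
  have [// | p_nz] := eqVneq p 0.
  by rewrite mulrC size_mulXn //; move: p_nz; rewrite -size_poly_eq0; lia.
by case: u => u1 u2; rewrite /rsize /= geq_max => /andP [/small -> /small ->].
Qed.

Lemma rsize_divt f : rsize (divt f) = (rsize f).-1.
Proof.
have X1 : (size ('X : P)).-1 = 1%N by rewrite size_polyX.
rewrite /rsize /divt /= !size_divp ?polyX_eq0 // X1 -subn1.
by move: (size f.1) (size f.2) => a b; lia.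
Qed.

Section UnitModT.

Variable m : Rr.
Hypothesis m_x : par m = rx.

Lemma par_rmul u : par (rmul m u) = rswap (par u).
Proof.
have /(congr1 (fun v : Rr => (v.1.[0], v.2.[0]))) := m_x.
rewrite /= !hornerE => -[m10 m20].
by rewrite /par /rswap /= !hornerE m10 m20 /= !hornerE; congr (_, _); congr polyC; ring.
Qed.

Lemma par_rmul_rpow s u : par (rmul (rpow m s) u) = iter s rswap (par u).
Proof. by elim: s => [|s IH]; rewrite ?rmul1r // rpowS -rmulA par_rmul IH. Qed.

Lemma rmul_eq_rscaleXn k u q :
  rmul m u = rscale 'X^k q -> exists v, u = rscale 'X^k v.
Proof.
elim: k u q => [|k IH] u q mu_q; first by exists u; rewrite rscale1.
have u_t : par u = rzero.
  by rewrite -[par u]rswapK -par_rmul mu_q rscaleXnS par_rscaleX.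
move: mu_q; rewrite -(divtK _ u_t) rmul_rscale rscaleXnS => /rscaleX_inj /IH [v ->].
by exists v; rewrite rscaleXnS.
Qed.

Lemma eq_parseq_congr k f g :
  parseq m k f = parseq m k g -> exists q, f = radd g (rscale 'X^k q).
Proof.
elim: k f g => [|k IH] f g; first by exists (radd g f); rewrite rscale1 raddKr.
rewrite !parseqS => /eqP; rewrite eqseq_cons => /andP [/eqP fg_par /eqP /IH [q]].
have f_gw : f = radd g (rscale 'X (divt (radd g f))).
  by rewrite divtK ?raddKr // par_radd fg_par raddrr.
rewrite {1}f_gw Tmap_add_rscaleX => /radd_inj w_q.
have [v w_v] : exists v, divt (radd g f) = rscale 'X^k v.
  move: w_q; rewrite /Tfactor; case: ifP => _; first exact: rmul_eq_rscaleXn.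
  by rewrite rmul1r => ->; exists q.
by exists v; rewrite f_gw w_v -rscaleXnS.
Qed.

Lemma parseq_surj p : all (fun a => a \in residues) p ->
  exists2 g, (rsize g <= size p)%N & parseq m (size p) g = p.
Proof.
elim/last_ind: p => [|p a IH]; first by exists rzero => //; rewrite /rsize /= size_poly0.
rewrite all_rcons size_rcons => /andP [a_res /IH [g g_small g_p]].
set k := size p in g_small g_p *; set F := iter k (Tmap m) g.
(* Adding t^k e shifts the k-th parity by m^s e = x^s e mod t. *)
pose e := iter (s_count p) rswap (radd a (par F)).
have e_par : par e = e.
  by rewrite par_iter_rswap par_radd par_id (par_residue _ a_res).
exists (radd g (rscale 'X^(k + 0) e)).
  apply: leq_trans (rsize_radd _ _) _; rewrite geq_max (leq_trans g_small) //.
  apply: leq_trans (rsize_rscaleXn _ _) _.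
  by rewrite addn0 -addn1 leq_add2l -e_par rsize_par.
rewrite parseq_rcons parseq_add_rscale g_p iter_Tmap_add_rscale g_p -/F.
rewrite expr0 rscale1 par_radd par_rmul_rpow e_par /e iter_rswapK.
by rewrite [radd a _]raddC raddKr.
Qed.

Lemma parseq_inj_small k f g : (rsize f <= k)%N -> (rsize g <= k)%N ->
  parseq m k f = parseq m k g -> f = g.
Proof.
move=> f_small g_small /eq_parseq_congr [q f_gq].
suff q0 : q = rzero by rewrite f_gq q0 rscale0 raddr0.
apply: (rscaleXn_small_eq0 k); rewrite -[rscale _ _](raddKr g) -f_gq.
by apply: leq_trans (rsize_radd _ _) _; rewrite geq_max g_small f_small.
Qed.

End UnitModT.

Lemma size_polyD_le (R : nzRingType) (p q : {poly R}) n :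
  (size p <= n)%N -> (size q <= n)%N -> (size (p + q)%R <= n)%N.
Proof. by move=> p_n q_n; apply: leq_trans (size_polyD p q) _; rewrite geq_max p_n. Qed.

Lemma size_polyM_le {R : nzRingType} {p q : {poly R}} {a b : nat} :
  (size p <= a)%N -> (size q <= b)%N -> (size (p * q)%R <= (a + b).-1)%N.
Proof.
move=> p_a q_b; apply: leq_trans (size_polyMleq p q) _.
by rewrite -!subn1 leq_sub2r // leq_add.
Qed.

Section DegreeBound.

Variable m : Rr.
Hypotheses (m_x : par m = rx) (m_deg : ((size m.2).+1 < size m.1)%N).

Lemma rsize_rmul f : (rsize (rmul m f) <= (rsize m).-1 + rsize f)%N.
Proof.
have m2_pos : (0 < size m.2)%N.
  rewrite lt0n size_poly_eq0; apply/eqP => m20; move: (congr1 snd m_x).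
  by rewrite /= m20 horner0 polyC0 => /eqP; rewrite eq_sym oner_eq0.
have -> : rsize m = size m.1 by apply/maxn_idPl; apply: ltnW (ltnW m_deg).
have f1_n : (size f.1 <= rsize f)%N := leq_maxl _ _.
have f2_n : (size f.2 <= rsize f)%N := leq_maxr _ _.
have rpoly_3 : (size rpoly <= 3)%N.
  by rewrite /rpoly !size_polyD_le ?size_polyXn ?size_polyX ?size_poly1.
have X_2 : (size ('X : P) <= 2)%N by rewrite size_polyX.
have [b_m1 b_rpoly b_m2 b_X] :
    [/\ ((size m.1 + rsize f).-1 <= (size m.1).-1 + rsize f)%N,
        ((3 + (size m.2 + rsize f).-1).-1 <= (size m.1).-1 + rsize f)%N,
        ((size m.2 + rsize f).-1 <= (size m.1).-1 + rsize f)%N &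
        ((2 + (size m.2 + rsize f).-1).-1 <= (size m.1).-1 + rsize f)%N].
  by move: m_deg m2_pos; move: (size m.1) (size m.2) (rsize f) => M s n *; split; lia.
rewrite [X in (X <= _)%N]/rsize geq_max; apply/andP; split;
  repeat apply: size_polyD_le.
- exact: leq_trans (size_polyM_le (leqnn _) f1_n) b_m1.
- exact: leq_trans (size_polyM_le rpoly_3 (size_polyM_le (leqnn _) f2_n)) b_rpoly.
- exact: leq_trans (size_polyM_le (leqnn _) f2_n) b_m1.
- exact: leq_trans (size_polyM_le (leqnn _) f1_n) b_m2.
- exact: leq_trans (size_polyM_le X_2 (size_polyM_le (leqnn _) f2_n)) b_X.
Qed.

Lemma rsize_Tmap f :
  (rsize (Tmap m f) <= (if par f == r1x then (rsize m).-1 else 0) + (rsize f).-1)%N.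
Proof.
have const_1 c : c \in residues -> (rsize c <= 1)%N.
  by move/par_residue <-; apply: rsize_par.
have divt_add_const g c : c \in residues ->
    (rsize (divt (radd g c)) <= (maxn (rsize g) 1).-1)%N.
  move=> /const_1 c_1; rewrite rsize_divt -!subn1 leq_sub2r //.
  by apply: leq_trans (rsize_radd _ _) _; rewrite geq_max leq_maxl leq_max c_1 orbT.
rewrite /Tmap; case: ifP => _.
  apply: leq_trans (divt_add_const _ _ _) _; rewrite ?inE ?eqxx ?orbT //.
  by move: (rsize_rmul f); move: (rsize (rmul m f)) (rsize m).-1 (rsize f) => *; lia.
rewrite add0n; have f_le : ((maxn (rsize f) 1).-1 <= (rsize f).-1)%N.
  by move: (rsize f) => *; lia.
repeat case: ifP => _; last by rewrite rsize_divt.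
all: by apply: leq_trans (divt_add_const _ _ _) f_le; rewrite !inE eqxx ?orbT.
Qed.

Lemma rsize_iter_Tmap k f :
  (rsize (iter k (Tmap m) f) <= s_count (parseq m k f) * (rsize m).-1 + (rsize f - k))%N.
Proof.
elim: k f => [|k IH] f; first by rewrite subn0.
rewrite iterSr parseqS /s_count /= -/(s_count _).
move: (IH (Tmap m f)) (rsize_Tmap f); case: (par f == r1x) => /=;
  move: (rsize (iter k _ _)) (rsize (Tmap m f)) (rsize f) (rsize m).-1 (s_count _);
  move=> *; lia.
Qed.

End DegreeBound.

Theorem mainTheorem10 (m : Rr) (N : nat) :
  par m = rx ->
  ((size m.2).+1 < size m.1)%N ->
  (0 < N)%N ->
  (forall f g q : Rr, f = radd g (rmul (tpow N) q) -> parseq m N f = parseq m N g)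
  /\ (forall f g : Rr, parseq m N f = parseq m N g ->
        exists q : Rr, f = radd g (rmul (tpow N) q))
  /\ (forall p : seq Rr, size p = N -> all (fun a => a \in residues) p ->
        exists f : Rr, parseq m N f = p)
  /\ (forall p : seq Rr, size p = N -> all (fun a => a \in residues) p ->
        exists g h : Rr,
          (rsize g <= N)%N /\
          (rsize h <= s_count p * (rsize m).-1)%N /\
          (forall f : Rr, parseq m N f = p <->
             exists q : Rr, f = radd g (rmul (tpow N) q)) /\
          (forall q : Rr,
             iter N (Tmap m) (radd g (rmul (tpow N) q))
             = radd h (rmul (rpow m (s_count p)) q)))
  /\ (forall p : seq Rr, size p = N -> all (fun a => a \in residues) p ->
        exists! f : Rr, (rsize f <= N)%N /\ parseq m N f = p).
Proof.
move=> m_x m_deg _.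
have parseq_congr g q : parseq m N (radd g (rmul (tpow N) q)) = parseq m N g.
  by rewrite rmul_tpow -[X in 'X^X]addn0 parseq_add_rscale.
have iter_congr g q : iter N (Tmap m) (radd g (rmul (tpow N) q))
    = radd (iter N (Tmap m) g) (rmul (rpow m (s_count (parseq m N g))) q).
  by rewrite rmul_tpow -[X in 'X^X]addn0 iter_Tmap_add_rscale expr0 rscale1.
have parseq_congr_inv f g : parseq m N f = parseq m N g ->
    exists q, f = radd g (rmul (tpow N) q).
  by move/(eq_parseq_congr m m_x) => [q ->]; exists q; rewrite rmul_tpow.
have cylinder p : size p = N -> all (fun a => a \in residues) p ->
    exists2 g, (rsize g <= N)%N & parseq m N g = p.
  by move=> <-; apply: parseq_surj.
split; first by move=> f g q ->.
split; first exact: parseq_congr_inv.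
split; first by move=> p /cylinder/[apply] -[g _ <-]; exists g.
split=> p /cylinder/[apply] -[g g_small g_p].
  exists g, (iter N (Tmap m) g); split=> //; split.
    have := rsize_iter_Tmap m m_x m_deg N g.
    by rewrite g_p (eqP g_small) addn0.
  split=> [f|q]; last by rewrite iter_congr g_p.
  split=> [f_p | [q ->]]; last by rewrite parseq_congr.
  by apply: parseq_congr_inv; rewrite f_p g_p.
exists g; split=> // f [f_small f_p].
by apply: (parseq_inj_small m m_x N); rewrite ?f_p ?g_p.
Qed.
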